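(* Let $U=[N]=\{1,\dots,N\}$ be a finite set of candidate neurons, let $\tau\in(0,1]$ be a threshold, and let $E:2^{[N]}\to[0,1]$ be the (regime-conditional) strength set function defined in the context below. Let $A^\star=\{j\in[N]: E(\{j\})\ge\tau\}$ be the set of $\tau$-agonists. Consider the binary hierarchical search procedure $\mathrm{Search}(U)$: for the current group $U$ it computes an upper confidence bound $\widehat{E}^{\mathrm{UCB}}(U)$ from finite-sample estimates; if $\widehat{E}^{\mathrm{UCB}}(U)<\tau$ it prunes $U$ (returns $\emptyset$); otherwise, if $|U|=1$, say $U=\{j\}$, it queries $j$ as a singleton (computing a point estimate $\hat E(\{j\})$ and returning $\{j\}$ if $\hat E(\{j\})\ge\tau$, else $\emptyset$); otherwise it splits $U$ into two halves $U_1,U_2$ and returns $\mathrm{Search}(U_1)\cup\mathrm{Search}(U_2)$. Let $\mathcal{T}$ be the set of all groups (nodes of the full binary splitting tree) that could possibly be queried by this procedure. Assume: (A2) for every group $A$ queried by the search, $A\cap A^\star\neq\emptyset$ implies $E(A)\ge\tau$; (A3) for each tested group $A$, the upper confidence bound satisfies $\Pr\big[E(A)\le\widehat{E}^{\mathrm{UCB}}(A)\big]\ge 1-\alpha_A$, and a group is pruned only if $\widehat{E}^{\mathrm{UCB}}(A)<\tau$; and assume the confidence budgets satisfy $\sum_{A\in\mathcal{T}}\alpha_A\le\alpha_{\mathrm{tot}}$ (equivalently, an alpha-spending schedule over the full tree with total budget at most $\alpha_{\mathrm{tot}}$). Then, with probability at least $1-\alpha_{\mathrm{tot}}$, the procedure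 does not prune any group $A$ that contains an element of $A^\star$. Consequently, with this probability every $j\in A^\star$ lies on an unpruned root-to-leaf path of the splitting tree and is eventually queried as a singleton.
   Context: Setting: a fixed layer of a language model with $N$ candidate neurons (scalar activations) and a fixed baseline regime $b\in\{0,1\}$. Two finite evaluation sets (slices) $\mathcal{D}^+$ and $\mathcal{D}^-$ consist of inputs on which the un-intervened model's binary behavior label equals $b$. For a set $A\subseteq[N]$, the intervention $\mathrm{do}(A)$ replaces the activations of the neurons in $A$ by fixed baseline values, and $\delta_{S}(A)=\Pr_{x\sim\mathcal{D}^S}[\text{post-intervention behavior label of }x\neq b]$ for $S\in\{+,-\}$ (uniform distribution on the slice). The strength is $E(A)=\max\{\delta_+(A),\delta_-(A)\}$. A neuron $j$ is a $\tau$-agonist if $E(\{j\})\ge\tau$. The flip rates are estimated on finite samples, and $\widehat{E}^{\mathrm{UCB}}(A)$ denotes the resulting upper confidence bound on $E(A)$ (e.g., the maximum of one-sided Clopper–Pearson upper bounds for the two slices). *)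

From mathcomp Require Import all_boot all_order all_algebra.
Set Implicit Arguments. Unset Strict Implicit. Unset Printing Implicit Defensive.
Import Order.TTheory GRing.Theory Num.Theory.
Local Open Scope ring_scope.

(* Neurons are indexed by 'I_N (i.e. {0,..,N-1}, a relabelling of [N]).
   A node of the binary splitting tree is an interval (lo, n) denoting the
   group {lo, ..., lo+n-1}. *)

Definition grp (N : nat) (p : nat * nat) : {set 'I_N} :=
  [set i : 'I_N | (p.1 <= i < p.1 + p.2)%N].

(* All nodes of the full binary splitting tree rooted at (lo, n);
   k is a recursion-depth bound (k = N suffices for the root (0, N)). *)
Fixpoint tnodes (k lo n : nat) : seq (nat * nat) :=
  (lo, n) :: (match k with
              | 0 => [::]
              | k'.+1 => if (1 < n)%N then
                           tnodes k' lo n./2 ++ tnodes k' (lo + n./2) (n - n./2)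
                         else [::]
              end).

Definition treeT (N : nat) : {set {set 'I_N}} :=
  [set A : {set 'I_N} | A \in [seq grp N p | p <- tnodes N 0 N]].

Definition agonists (R : realFieldType) (N : nat) (E : {set 'I_N} -> R) (tau : R)
  : {set 'I_N} := [set j : 'I_N | tau <= E [set j]].

(* The procedure Search, for fixed realized statistics:
   ucb A = upper confidence bound computed for group A,
   ehat j = point estimate of E({j}).
   Returns (list of queried nodes, output set). *)
Fixpoint search_run (R : realFieldType) (N : nat) (ucb : {set 'I_N} -> R)
    (ehat : 'I_N -> R) (tau : R) (k lo n : nat) : seq (nat * nat) * {set 'I_N} :=
  let A := grp N (lo, n) in
  if ucb A < tau then ([:: (lo, n)], set0)
  else if (n < 2)%N then
    ([:: (lo, n)], [set j in A | tau <= ehat j])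
  else match k with
       | 0 => ([:: (lo, n)], set0)
       | k'.+1 =>
           let r1 := search_run ucb ehat tau k' lo n./2 in
           let r2 := search_run ucb ehat tau k' (lo + n./2) (n - n./2) in
           ((lo, n) :: r1.1 ++ r2.1, r1.2 :|: r2.2)
       end.

Definition queried (R : realFieldType) (N : nat) (ucb : {set 'I_N} -> R)
    (ehat : 'I_N -> R) (tau : R) : seq (nat * nat) :=
  (search_run ucb ehat tau N 0 N).1.

Definition pruned (R : realFieldType) (N : nat) (ucb : {set 'I_N} -> R) (tau : R)
    (A : {set 'I_N}) : bool := ucb A < tau.

Definition Pr (R : realFieldType) (Omega : finType) (P : Omega -> R)
    (ev : pred Omega) : R := \sum_(w | ev w) P w.

(* Union bound: with probability at least 1 - alpha_tot every node A of the
   splitting tree satisfies E(A) <= UCB(A).  On that event a queried group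
   meeting the agonists has UCB >= E >= tau by (A2), so it is not pruned; in
   particular the halves containing an agonist j are never pruned, and
   following them down the tree reaches the singleton {j}. *)

From mathcomp Require Import all_boot all_order all_algebra.
From mathcomp Require Import zify lra.

Set Implicit Arguments.
Unset Strict Implicit.
Unset Printing Implicit Defensive.

Import Order.TTheory GRing.Theory Num.Theory.
Local Open Scope ring_scope.

Section FiniteProbability.
Variables (R : realFieldType) (Omega : finType) (P : Omega -> R).
Hypotheses (P_ge0 : forall w, 0 <= P w) (P_sum1 : \sum_w P w = 1).

Lemma Pr_le (e1 e2 : pred Omega) :
  (forall w, e1 w -> e2 w) -> Pr P e1 <= Pr P e2.
Proof.
move=> e12; rewrite /Pr [leRHS]big_mkcond [leLHS]big_mkcond /=.
apply: ler_sum => w _; case: ifP => [/e12 -> //|_]; by case: ifP.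
Qed.

Lemma PrC (e : pred Omega) : Pr P (fun w => ~~ e w) = 1 - Pr P e.
Proof. by rewrite -P_sum1 (bigID e) /= /Pr addrC addrK. Qed.

Lemma Pr_exists_le (I : finType) (S : {pred I}) (e : I -> pred Omega) :
  Pr P (fun w => [exists i in S, e i w]) <= \sum_(i in S) Pr P (e i).
Proof.
rewrite /Pr big_mkcond (eq_bigr (fun i => \sum_w if e i w then P w else 0));
  last by move=> i _; rewrite big_mkcond.
rewrite exchange_big /=; apply: ler_sum => w _.
have term_ge0 i : 0 <= (if e i w then P w else 0) by case: ifP.
case: ifP => [/exists_inP [i Si ei]|_]; last exact: sumr_ge0.
by rewrite (bigD1 i) //= ei lerDl sumr_ge0.
Qed.

Lemma Pr_forall_ge (I : finType) (S : {pred I}) (e : I -> pred Omega)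
    (alpha : I -> R) :
  (forall i, i \in S -> 1 - alpha i <= Pr P (e i)) ->
  1 - \sum_(i in S) alpha i <= Pr P (fun w => [forall i in S, e i w]).
Proof.
move=> e_ge.
have -> : Pr P (fun w => [forall i in S, e i w])
        = Pr P (fun w => ~~ [exists i in S, ~~ e i w]).
  by apply: eq_bigl => w; rewrite negb_exists_in; apply: eq_forallb => i; rewrite negbK.
rewrite PrC lerD2l lerN2; apply: le_trans (Pr_exists_le S (fun i w => ~~ e i w)) _.
by apply: ler_sum => i Si; rewrite PrC; have := e_ge i Si; lra.
Qed.

End FiniteProbability.

Lemma grp_small_eq1 (N lo n : nat) (j : 'I_N) :
  (n < 2)%N -> j \in grp N (lo, n) -> grp N (lo, n) = [set j].
Proof.
rewrite inE /= => n_lt2 jA; apply/setP => i; rewrite !inE /=.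
apply/idP/eqP => [iA|->//]; apply: val_inj => /=; lia.
Qed.

Lemma grp_split (N lo n : nat) (j : 'I_N) : j \in grp N (lo, n) ->
  j \in grp N (lo, n./2) \/ j \in grp N (lo + n./2, n - n./2)%N.
Proof.
rewrite !inE /= => /andP [lo_j j_hi].
have [j_lt|j_ge] := ltnP j (lo + n./2); [left|right]; apply/andP; split; lia.
Qed.

Lemma halves_lt (n : nat) : (1 < n)%N -> (n./2 < n)%N /\ (n - n./2 < n)%N.
Proof. by move: (odd_double_half n); rewrite -addnn; case: odd => /=; lia. Qed.

Section Search.
Variables (R : realFieldType) (N : nat) (ucb : {set 'I_N} -> R)
  (ehat : 'I_N -> R) (tau : R).
Local Notation run := (search_run ucb ehat tau).

Lemma mem_search_run_root k lo n : (lo, n) \in (run k lo n).1.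
Proof. by case: k => [|k] /=; do ! case: ifP => _; rewrite /= inE eqxx. Qed.

Lemma search_run_sub_tnodes k lo n : {subset (run k lo n).1 <= tnodes k lo n}.
Proof.
elim: k lo n => [|k IH] lo n p /=; first by do ! case: ifP.
case: ifP => _; first by rewrite mem_seq1 => /eqP ->; rewrite inE eqxx.
case: ifP => [_|n_ge2]; first by rewrite mem_seq1 => /eqP ->; rewrite inE eqxx.
rewrite ifT; last by move: n_ge2; rewrite ltnNge => /negbFE.
by rewrite !inE !mem_cat => /or3P [->|/IH->|/IH->]; rewrite ?orbT.
Qed.

Lemma queried_in_treeT p : p \in queried ucb ehat tau -> grp N p \in treeT N.
Proof. by move=> /search_run_sub_tnodes p_tree; rewrite inE map_f. Qed.

Lemma search_run_reaches k lo n (j : 'I_N) :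
  (n <= k.+1)%N -> j \in grp N (lo, n) ->
  {in (run k lo n).1, forall p, j \in grp N p -> ~~ pruned ucb tau (grp N p)} ->
  has (fun p => (grp N p == [set j]) && ~~ pruned ucb tau (grp N p))
      (run k lo n).1.
Proof.
elim: k lo n => [|k IH] lo n n_le jA unpruned;
  have /negbTE root_kept := unpruned _ (mem_search_run_root _ lo n) jA;
  rewrite /pruned in root_kept; rewrite /= root_kept;
  (case: (ltnP n 2) => [n_lt2|n_ge2];
    first by rewrite /= /pruned root_kept (grp_small_eq1 n_lt2 jA) eqxx).
  by move: n_le n_ge2; lia.
have [half1_lt half2_lt] := halves_lt n_ge2.
have unpruned_halves :
    {in (run k lo n./2).1 ++ (run k (lo + n./2) (n - n./2)).1,
      forall p, j \in grp N p -> ~~ pruned ucb tau (grp N p)}.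
  by move=> p p_sub; apply: unpruned; rewrite /= root_kept ltnNge n_ge2 inE p_sub orbT.
rewrite /= has_cat; apply/orP; right; apply/orP.
have [jl|jr] := grp_split jA; [left; apply: (IH _ _ _ jl) | right; apply: (IH _ _ _ jr)];
  by [lia | move=> p p_sub; apply: unpruned_halves; rewrite mem_cat p_sub ?orbT].
Qed.

Lemma search_keeps_covered (E : {set 'I_N} -> R) (Astar : {set 'I_N}) :
  (forall p, p \in queried ucb ehat tau ->
     grp N p :&: Astar != set0 -> tau <= E (grp N p)) ->
  (forall A, A \in treeT N -> E A <= ucb A) ->
  all (fun p => (grp N p :&: Astar != set0) ==> ~~ pruned ucb tau (grp N p))
      (queried ucb ehat tau)
  && [forall j in Astar,
        has (fun p => (grp N p == [set j]) && ~~ pruned ucb tau (grp N p))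
            (queried ucb ehat tau)].
Proof.
move=> covered_strong ucb_ge.
have kept p : p \in queried ucb ehat tau ->
    grp N p :&: Astar != set0 -> ~~ pruned ucb tau (grp N p).
  move=> p_q p_cov; rewrite /pruned -leNgt.
  exact: le_trans (covered_strong p p_q p_cov) (ucb_ge _ (queried_in_treeT p_q)).
apply/andP; split; first by apply/allP => p p_q; apply/implyP; exact: kept.
apply/forall_inP => j j_star; apply: search_run_reaches.
- exact: leqnSn.
- by rewrite inE /= ltn_ord.
- move=> p p_q j_p; apply: kept p_q _; apply/set0Pn; exists j.
  by rewrite inE j_p.
Qed.

End Search.

Theorem theoremB1 (R : realFieldType) (N : nat) (tau : R)
    (E : {set 'I_N} -> R)
    (Omega : finType) (P : Omega -> R)
    (ucb : Omega -> {set 'I_N} -> R) (ehat : Omega -> 'I_N -> R)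
    (alpha : {set 'I_N} -> R) (alpha_tot : R) :
  0 < tau -> tau <= 1 ->
  (forall A, 0 <= E A <= 1) ->
  (forall w, 0 <= P w) -> \sum_w P w = 1 ->
  (* (A2) *)
  (forall w p, p \in queried (ucb w) (ehat w) tau ->
     grp N p :&: agonists E tau != set0 -> tau <= E (grp N p)) ->
  (* (A3) *)
  (forall A, A \in treeT N ->
     1 - alpha A <= Pr P (fun w => E A <= ucb w A)) ->
  \sum_(A in treeT N) alpha A <= alpha_tot ->
  1 - alpha_tot <= Pr P (fun w =>
    all (fun p => (grp N p :&: agonists E tau != set0) ==>
                  ~~ pruned (ucb w) tau (grp N p))
        (queried (ucb w) (ehat w) tau)
    && [forall j in agonists E tau,
          has (fun p => (grp N p == [set j]) && ~~ pruned (ucb w) tau (grp N p))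
              (queried (ucb w) (ehat w) tau)]).
Proof.
move=> _ _ _ P_ge0 P_sum1 A2 A3 alpha_le.
have ucb_valid_likely := Pr_forall_ge P_ge0 P_sum1 A3.
apply: le_trans (Pr_le P_ge0 _) => [|w /forall_inP ucb_ge].
  by apply: le_trans ucb_valid_likely; rewrite lerD2l lerN2.
exact: search_keeps_covered (A2 w) ucb_ge.
Qed.
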